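(* Let $P$ be a continuous poset, $U\subseteq P$ an up-set and $D\subseteq P$ a down-set. Then (i) $k[U]$ is lower semi-continuous iff $U$ is Scott-open; (ii) $k[D]$ is lower semi-continuous iff $D$ is Scott-closed. For $P=\mathbb R^n$ with componentwise order one also has: (iii) $k[U]$ is upper semi-continuous iff $U$ is closed in the standard topology; (iv) $k[D]$ is upper semi-continuous iff $D$ is open in the standard topology.
   Context: Let $P$ be a poset. A subset is directed if nonempty and any two elements have an upper bound in it. $x\ll y$ means: for every directed $D$ whose supremum exists with $y\le\sup D$, some $d\in D$ satisfies $x\le d$. $P$ is continuous if for each $p$ the set $\{x:x\ll p\}$ is directed with supremum $p$. A set $U$ is Scott-open if it is an up-set meeting every directed set whose supremum exists and lies in $U$; Scott-closed sets are complements of Scott-open sets. $k$ is a commutative ring with unity; persistence modules are functors from $P$ (as a category) to $k$-modules. For convex $I\subseteq P$, $k[I]$ is the indicator module: $k$ on $I$, $0$ elsewhere, identity maps within $I$, zero otherwise. $\underline M_p=\varprojlim_{x\gg p}M_x$, $\overline M_p=\varinjlim_{x\ll p}M_x$; $M$ is upper (resp. lower) semi-continuous if the canonical morphism $M\to\underline M$ (resp. $\overline M\to M$) is an isomorphism. *)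

From HB Require Import structures.
From mathcomp Require Import all_boot all_order all_algebra.
From mathcomp Require Import all_classical all_reals all_analysis.
Set Implicit Arguments. Unset Strict Implicit. Unset Printing Implicit Defensive.
Import Order.TTheory GRing.Theory Num.Theory.
Local Open Scope classical_set_scope.
Local Open Scope order_scope.

Section PosetNotions.
Context {disp : Order.disp_t} {P : porderType disp}.

Definition directed (D : set P) : Prop :=
  (exists d, D d) /\
  forall x y, D x -> D y -> exists z, [/\ D z, x <= z & y <= z].

Definition is_sup (D : set P) (s : P) : Prop :=
  (forall d, D d -> d <= s) /\
  (forall u, (forall d, D d -> d <= u) -> s <= u).

Definition way_below (x y : P) : Prop :=
  forall (D : set P) (s : P), directed D -> is_sup D s -> y <= s ->
    exists2 d, D d & x <= d.

Definition upset (U : set P) : Prop := forall x y, U x -> x <= y -> U y.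
Definition downset (D : set P) : Prop := forall x y, D y -> x <= y -> D x.

Definition scott_open (U : set P) : Prop :=
  upset U /\
  forall (D : set P) (s : P), directed D -> is_sup D s -> U s ->
    exists2 d, D d & U d.

Definition scott_closed (C : set P) : Prop := scott_open (~` C).

End PosetNotions.

Definition continuous_poset (disp : Order.disp_t) (P : porderType disp) : Prop :=
  forall p : P, directed [set x | way_below x p] /\ is_sup [set x | way_below x p] p.

Record pmod (k : comNzRingType) (disp : Order.disp_t) (P : porderType disp) := PMod {
  pm_obj :> P -> lmodType k;
  pm_map : forall p q : P, p <= q -> pm_obj p -> pm_obj q
}.
Arguments pm_map {k disp P} _ {p q} _ _.

Definition klinear (k : comNzRingType) (V W : lmodType k) (f : V -> W) : Prop :=
  forall (a : k) (u v : V), (f (a *: u + v) = a *: f u + f v)%R.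

Definition is_pmod k disp (P : porderType disp) (M : pmod k P) : Prop :=
  [/\ forall p q (h : p <= q), klinear (pm_map M h),
      forall p (h : p <= p) v, pm_map M h v = v &
      forall p q r (h1 : p <= q) (h2 : q <= r) (h3 : p <= r) v,
        pm_map M h3 v = pm_map M h2 (pm_map M h1 v)].

(** Lower semi-continuity: for every p, the canonical cocone
    (M_(x<=p) : M_x -> M_p)_(x << p) exhibits M_p as the colimit of the
    diagram (M_x)_(x << p); i.e. the canonical map colim_(x<<p) M_x -> M_p
    is an isomorphism. *)
Definition pm_lower_semicontinuous k disp (P : porderType disp) (M : pmod k P) : Prop :=
  forall p : P, forall (N : lmodType k)
    (f : forall x : P, way_below x p -> M x -> N),
    (forall x (hx : way_below x p), klinear (f x hx)) ->
    (forall x y (hx : way_below x p) (hy : way_below y p) (hxy : x <= y) v,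
        f y hy (pm_map M hxy v) = f x hx v) ->
    exists g : M p -> N,
      [/\ klinear g,
          (forall x (hx : way_below x p) (hxp : x <= p) v,
              g (pm_map M hxp v) = f x hx v) &
          (forall g' : M p -> N, klinear g' ->
             (forall x (hx : way_below x p) (hxp : x <= p) v,
                 g' (pm_map M hxp v) = f x hx v) ->
             forall v, g' v = g v)].

(** Upper semi-continuity: for every p, the canonical cone
    (M_(p<=x) : M_p -> M_x)_(p << x) exhibits M_p as the limit of the
    diagram (M_x)_(x >> p); i.e. the canonical map M_p -> lim_(x>>p) M_x
    is an isomorphism. *)
Definition pm_upper_semicontinuous k disp (P : porderType disp) (M : pmod k P) : Prop :=
  forall p : P, forall (N : lmodType k)
    (f : forall x : P, way_below p x -> N -> M x),
    (forall x (hx : way_below p x), klinear (f x hx)) ->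
    (forall x y (hx : way_below p x) (hy : way_below p y) (hxy : x <= y) v,
        pm_map M hxy (f x hx v) = f y hy v) ->
    exists g : N -> M p,
      [/\ klinear g,
          (forall x (hx : way_below p x) (hpx : p <= x) v,
              pm_map M hpx (g v) = f x hx v) &
          (forall g' : N -> M p, klinear g' ->
             (forall x (hx : way_below p x) (hpx : p <= x) v,
                 pm_map M hpx (g' v) = f x hx v) ->
             forall v, g' v = g v)].

(** Indicator module k[I]: k (realised as 'rV[k]_1) on I, 0 (= 'rV[k]_0)
    elsewhere; the map for p <= q is the identity k -> k when p, q \in I
    (multiplication by the 1x1 matrix 1) and zero otherwise (the zero
    module is involved). For convex I this is a functor. *)
Definition indicator_module (k : comNzRingType) disp (P : porderType disp)
    (I : set P) : pmod k P :=
  @PMod k disp P (fun p => 'rV[k]_(`[< I p >] : nat))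
    (fun p q _ (v : 'rV[k]_(`[< I p >] : nat)) =>
       (v *m (const_mx 1%R : 'M[k]_(`[< I p >] : nat, `[< I q >] : nat)))%R).

(** R^n with the componentwise order; same carrier as 'rV[R]_n, which
    carries the standard (product/normed) topology. *)
Definition Rn (R : realType) (n : nat) : Type := 'rV[R]_n.
HB.instance Definition _ (R : realType) (n : nat) := Choice.on (Rn R n).

Definition Rn_le (R : realType) (n : nat) (u v : Rn R n) : bool :=
  [forall i, (u ord0 i <= v ord0 i)%R].

Lemma Rn_le_refl (R : realType) (n : nat) : reflexive (@Rn_le R n).
Proof. by move=> u; apply/forallP => i. Qed.

Lemma Rn_le_anti (R : realType) (n : nat) : antisymmetric (@Rn_le R n).
Proof.
move=> u v /andP[/forallP uv /forallP vu]; apply/matrixP => i j.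
by rewrite (ord1 i); apply/eqP; rewrite eq_le uv vu.
Qed.

Lemma Rn_le_trans (R : realType) (n : nat) : transitive (@Rn_le R n).
Proof.
move=> v u w /forallP uv /forallP vw; apply/forallP => i.
exact: le_trans (uv i) (vw i).
Qed.

HB.instance Definition _ (R : realType) (n : nat) :=
  Order.Le_isPOrder.Build Order.default_display (Rn R n)
    (@Rn_le_refl R n) (@Rn_le_anti R n) (@Rn_le_trans R n).

From HB Require Import structures.
From mathcomp Require Import all_boot all_order all_algebra.
From mathcomp Require Import all_classical all_reals all_analysis.
Import numFieldNormedType.Exports.
Set Implicit Arguments. Unset Strict Implicit. Unset Printing Implicit Defensive.
Import Order.TTheory GRing.Theory Num.Theory.
Local Open Scope classical_set_scope.
Local Open Scope ring_scope.
Local Open Scope order_scope.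

(* The structure maps of an indicator module [k[I]] are identities or zero.
   Hence the cocone [(k[I]_x -> k[I]_p)_(x in W)] over a directed family [W]
   of points below [p] is a colimit exactly when membership in [I] eventually
   agrees with membership of [p] along [W]; dually for cones over codirected
   families above [p].  When [I] is an up-set or a down-set, "eventually"
   may be weakened to "for some [x] in [W]".  For [W] the way-below set of
   [p] in a continuous poset, the resulting condition on all [p] is
   Scott-openness of an up-set, resp. Scott-closedness of a down-set.  In
   [R^n], [p << x] means [p_i < x_i] for all [i]; the way-above sets are then
   cofinal in the neighbourhoods of [p], and the condition becomes
   closedness of an up-set, resp. openness of a down-set. *)

Section KLinear.
Context {k : comNzRingType}.

Lemma klinear0 (V W : lmodType k) (f : V -> W) : klinear f -> f 0 = 0.
Proof.
move=> flin; have := flin 1 0 0; rewrite scaler0 add0r scale1r => f0.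
by apply: (addrI (f 0)); rewrite addr0 -f0.
Qed.

Lemma klinear_zero {V W : lmodType k} : klinear (fun _ : V => 0 : W).
Proof. by move=> a u v; rewrite scaler0 addr0. Qed.

Lemma klinear_id {V : lmodType k} : klinear (fun v : V => v).
Proof. by []. Qed.

Lemma klinear_comp (U V W : lmodType k) (f : V -> W) (g : U -> V) :
  klinear f -> klinear g -> klinear (fun u => f (g u)).
Proof. by move=> flin glin a u v; rewrite glin flin. Qed.

Lemma klinear_mulmxr (m n p : nat) (A : 'M[k]_(n, p)) :
  klinear (fun v : 'M[k]_(m, n) => v *m A).
Proof. by move=> a u v; rewrite mulmxDl -scalemxAl. Qed.

End KLinear.

Section IndicatorMatrices.
Context {k : comNzRingType}.

Local Notation one_mx b c := (const_mx 1 : 'M[k]_(nat_of_bool b, nat_of_bool c)).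

Lemma row_bool0 (b : bool) (v : 'rV[k]_b) : ~~ b -> v = 0.
Proof. by case: b v => // v _; apply/rowP => -[]. Qed.

Lemma mulmx_one_mx_id (b : bool) (v : 'rV[k]_b) : v *m one_mx b b = v.
Proof.
case: b v => v; last by apply/rowP => -[].
by apply/rowP => j; rewrite !mxE big_ord1 !mxE mulr1 (ord1 j).
Qed.

(* A composite [k^b -> k^c -> k^d] is the direct map unless it factors
   through [0] while the direct map does not. *)
Lemma mulmx_one_mxA (b c d : bool) (v : 'rV[k]_b) : (b -> d -> c) ->
  v *m one_mx b c *m one_mx c d = v *m one_mx b d.
Proof.
case: b v => [v|v _]; last by rewrite (row_bool0 v) // !mul0mx.
case: d => [/(_ isT isT) c1|_]; last by apply/rowP => -[].
case: c c1 => // _; rewrite -mulmxA; congr (_ *m _).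
by apply/matrixP => i j; rewrite !mxE big_ord1 !mxE mulr1.
Qed.

Lemma const1_row_neq0 (b : bool) : b -> (const_mx 1 : 'rV[k]_b) != 0.
Proof.
by case: b => // _; apply/eqP => /matrixP /(_ 0 0)/eqP; rewrite !mxE oner_eq0.
Qed.

End IndicatorMatrices.

Lemma asbool_imply2 (A B C : Prop) : (A -> B -> C) -> `[< A >] -> `[< B >] -> `[< C >].
Proof. by move=> h /asboolP a /asboolP b; apply/asboolP; exact: h. Qed.

(* [pm_lower_semicontinuous M] (resp. [pm_upper_semicontinuous M]) is by
   definition [is_colimit_cocone M (way_below^~ p) p] (resp.
   [is_limit_cone M (way_below p) p]) for all [p]. *)
Section Cocones.
Variables (k : comNzRingType) (disp : Order.disp_t) (P : porderType disp).

Definition is_colimit_cocone (M : pmod k P) (W : set P) (p : P) : Prop :=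
  forall (N : lmodType k) (f : forall x : P, W x -> M x -> N),
    (forall x (hx : W x), klinear (f x hx)) ->
    (forall x y (hx : W x) (hy : W y) (hxy : x <= y) v,
        f y hy (pm_map M hxy v) = f x hx v) ->
    exists g : M p -> N,
      [/\ klinear g,
          (forall x (hx : W x) (hxp : x <= p) v, g (pm_map M hxp v) = f x hx v) &
          (forall g' : M p -> N, klinear g' ->
             (forall x (hx : W x) (hxp : x <= p) v, g' (pm_map M hxp v) = f x hx v) ->
             forall v, g' v = g v)].

Definition is_limit_cone (M : pmod k P) (W : set P) (p : P) : Prop :=
  forall (N : lmodType k) (f : forall x : P, W x -> N -> M x),
    (forall x (hx : W x), klinear (f x hx)) ->
    (forall x y (hx : W x) (hy : W y) (hxy : x <= y) v,
        pm_map M hxy (f x hx v) = f y hy v) ->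
    exists g : N -> M p,
      [/\ klinear g,
          (forall x (hx : W x) (hpx : p <= x) v, pm_map M hpx (g v) = f x hx v) &
          (forall g' : N -> M p, klinear g' ->
             (forall x (hx : W x) (hpx : p <= x) v, pm_map M hpx (g' v) = f x hx v) ->
             forall v, g' v = g v)].

End Cocones.

Section DirectedSets.
Context {disp : Order.disp_t} {P : porderType disp}.

Definition codirected (W : set P) : Prop :=
  (exists x, W x) /\
  forall x y, W x -> W y -> exists z, [/\ W z, z <= x & z <= y].

Definition eventually_up (W A : set P) : Prop :=
  exists2 x0, W x0 & forall z, W z -> x0 <= z -> A z.

Definition eventually_down (W A : set P) : Prop :=
  exists2 x0, W x0 & forall z, W z -> z <= x0 -> A z.

Lemma way_below_le (x y : P) : way_below x y -> x <= y.
Proof.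
move=> xy.
have dir : directed [set y] by split=> [|_ _ -> ->]; exists y.
have sup : is_sup [set y] y by split=> [_ ->|u]; [|apply].
by have [_ -> //] := xy _ _ dir sup (lexx y).
Qed.

Lemma directed_finite_ub (D : set P) (J : finType) (f : J -> P) :
  directed D -> (forall j, D (f j)) -> exists2 d, D d & forall j, f j <= d.
Proof.
move=> [[d0 Dd0] dirD] Df.
suff [d Dd fd] : exists2 d, D d & forall j, j \in enum J -> f j <= d.
  by exists d => // j; apply: fd; rewrite mem_enum.
elim: (enum J) => [|j s [d Dd fd]]; first by exists d0.
have [z [Dz dz jz]] := dirD d (f j) Dd (Df j).
by exists z => // i; rewrite inE => /orP[/eqP -> //|/fd/le_trans]; apply.
Qed.

Variables (I W : set P) (p : P).
Hypothesis I_monotone : upset I \/ downset I.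

Lemma eventually_up_agree : (forall x, W x -> x <= p) ->
  (exists2 x, W x & (I x <-> I p)) -> eventually_up W (fun z => I z <-> I p).
Proof.
move=> Wp [x Wx [Ixp Ipx]]; exists x => // z Wz xz.
case: I_monotone => [Iup|Idown]; split=> [Iz|Ip].
- exact: Iup _ _ Iz (Wp z Wz).
- exact: Iup _ _ (Ipx Ip) xz.
- exact/Ixp/(Idown _ _ Iz xz).
- exact: Idown _ _ Ip (Wp z Wz).
Qed.

Lemma eventually_down_agree : (forall x, W x -> p <= x) ->
  (exists2 x, W x & (I x <-> I p)) -> eventually_down W (fun z => I z <-> I p).
Proof.
move=> Wp [x Wx [Ixp Ipx]]; exists x => // z Wz zx.
case: I_monotone => [Iup|Idown]; split=> [Iz|Ip].
- exact/Ixp/(Iup _ _ Iz zx).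
- exact: Iup _ _ Ip (Wp z Wz).
- exact: Idown _ _ Iz (Wp z Wz).
- exact: Idown _ _ (Ipx Ip) zx.
Qed.

End DirectedSets.

Section IndicatorColimits.
Context {k : comNzRingType} {disp : Order.disp_t} {P : porderType disp}.
Variables (I W : set P) (p : P).
Local Notation kI := (indicator_module k I).
Local Notation one_mx b c := (const_mx 1 : 'M[k]_(nat_of_bool b, nat_of_bool c)).

Lemma colimit_indicator : directed W -> (forall x, W x -> x <= p) ->
  eventually_up W (fun z => I z <-> I p) -> is_colimit_cocone kI W p.
Proof.
move=> [_ dirW] Wp [x0 Wx0 agree] N f flin fcomp.
have agree0 := agree x0 Wx0 (lexx x0).
exists (fun v => f x0 Wx0 (v *m one_mx `[< I p >] `[< I x0 >])); split.
- exact: klinear_comp (flin _ _) (klinear_mulmxr _).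
- move=> x Wx xp v /=.
  have [z [Wz xz x0z]] := dirW x x0 Wx Wx0.
  have agreez := agree z Wz x0z.
  rewrite -(fcomp x z Wx Wz xz v) -(fcomp x0 z Wx0 Wz x0z) /=.
  by rewrite !mulmx_one_mxA //; apply: asbool_imply2; tauto.
- move=> g' g'lin g'comp v.
  rewrite -[v in g' v]mulmx_one_mx_id -(@mulmx_one_mxA _ _ `[< I x0 >]).
    exact: (g'comp x0 Wx0 (Wp x0 Wx0)).
  by apply: asbool_imply2; tauto.
Qed.

Lemma colimit_indicator_agree : (exists x, W x) -> (forall x, W x -> x <= p) ->
  is_colimit_cocone kI W p -> exists2 x, W x & (I x <-> I p).
Proof.
move=> [x0 Wx0] Wp colim; apply: contrapT => disagree.
have flip x : W x -> (I x <-> ~ I p).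
  move=> Wx; split=> [Ix Ip|nIp]; last apply: contrapT => nIx;
    by apply: disagree; exists x => //; tauto.
have [Ip|nIp] := pselect (I p).
- have ip : `[< I p >] by apply/asboolP.
  have zero_map x (Wx : W x) (xp : x <= p) (v : kI x) : pm_map kI xp v = 0.
    rewrite /= (row_bool0 v) ?mul0mx //; apply/asboolPn => Ix.
    by apply: (flip x Wx).1.
  have [g [_ _ g_uniq]] := colim (kI p) (fun x _ _ => 0) (fun x _ => klinear_zero)
    (fun _ _ _ _ _ _ => erefl).
  have := g_uniq _ klinear_id (fun x Wx xp v => zero_map x Wx xp v) (const_mx 1).
  rewrite -(g_uniq _ klinear_zero (fun _ _ _ _ => erefl)).
  by move/eqP; rewrite (negbTE (const1_row_neq0 ip)).
- have allI x : W x -> `[< I x >] by move=> Wx; apply/asboolP/(flip x Wx).2.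
  have [|g [glin gcomp _]] := colim _ (fun x _ v => v *m one_mx `[< I x >] true)
    (fun x _ => klinear_mulmxr _).
    by move=> x y _ Wy xy v; rewrite mulmx_one_mxA // => _ _; apply: allI.
  have := gcomp x0 Wx0 (Wp x0 Wx0) (const_mx 1 *m one_mx true `[< I x0 >]).
  rewrite (row_bool0 (pm_map kI _ _)); last exact/asboolPn.
  rewrite (klinear0 glin) mulmx_one_mxA ?mulmx_one_mx_id => [/eqP|_ _].
    by rewrite eq_sym (negbTE (const1_row_neq0 isT)).
  exact: allI.
Qed.

Lemma limit_indicator : codirected W -> (forall x, W x -> p <= x) ->
  eventually_down W (fun z => I z <-> I p) -> is_limit_cone kI W p.
Proof.
move=> [_ codirW] Wp [x0 Wx0 agree] N f flin fcomp.
have agree0 := agree x0 Wx0 (lexx x0).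
exists (fun v => f x0 Wx0 v *m one_mx `[< I x0 >] `[< I p >]); split.
- exact: klinear_comp (klinear_mulmxr _) (flin _ _).
- move=> x Wx px v /=.
  have [z [Wz zx zx0]] := codirW x x0 Wx Wx0.
  have agreez := agree z Wz zx0.
  rewrite -(fcomp z x Wz Wx zx v) -(fcomp z x0 Wz Wx0 zx0 v) /=.
  by rewrite !mulmx_one_mxA //; apply: asbool_imply2; tauto.
- move=> g' g'lin g'comp v.
  have /= <- := g'comp x0 Wx0 (Wp x0 Wx0) v.
  rewrite mulmx_one_mxA ?mulmx_one_mx_id //.
  by apply: asbool_imply2; tauto.
Qed.

Lemma limit_indicator_agree : (exists x, W x) -> (forall x, W x -> p <= x) ->
  is_limit_cone kI W p -> exists2 x, W x & (I x <-> I p).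
Proof.
move=> [x0 Wx0] Wp lim; apply: contrapT => disagree.
have flip x : W x -> (I x <-> ~ I p).
  move=> Wx; split=> [Ix Ip|nIp]; last apply: contrapT => nIx;
    by apply: disagree; exists x => //; tauto.
have [Ip|nIp] := pselect (I p).
- have ip : `[< I p >] by apply/asboolP.
  have zero_map x (Wx : W x) (px : p <= x) (v : kI p) : pm_map kI px v = 0.
    rewrite (row_bool0 (pm_map kI _ _)) //; apply/asboolPn => Ix.
    by apply: (flip x Wx).1.
  have [g [_ _ g_uniq]] := lim (kI p) (fun x _ _ => 0) (fun x _ => klinear_zero)
    (fun _ _ _ _ _ _ => mul0mx _ _).
  have := g_uniq _ klinear_id (fun x Wx px v => zero_map x Wx px v) (const_mx 1).
  rewrite -(g_uniq _ klinear_zero (fun _ _ _ _ => mul0mx _ _)).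
  by move/eqP; rewrite (negbTE (const1_row_neq0 ip)).
- have allI x : W x -> `[< I x >] by move=> Wx; apply/asboolP/(flip x Wx).2.
  have [|g [glin gcomp _]] := lim _ (fun x _ v => v *m one_mx true `[< I x >])
    (fun x _ => klinear_mulmxr _).
    move=> x y Wx _ xy v.
    by rewrite -[RHS](@mulmx_one_mxA _ _ `[< I x >]) // => _ _; apply: allI.
  have one_back : const_mx 1 *m one_mx true `[< I x0 >] *m one_mx `[< I x0 >] true
      = const_mx 1 :> 'rV[k]_(nat_of_bool true).
    by rewrite mulmx_one_mxA ?mulmx_one_mx_id // => _ _; apply: allI.
  have map0 : pm_map kI (Wp x0 Wx0) 0 = 0 by exact: mul0mx.
  have := gcomp x0 Wx0 (Wp x0 Wx0) (const_mx 1).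
  rewrite (row_bool0 (g _)) ?map0; last exact/asboolPn.
  move/(congr1 (mulmx^~ (one_mx `[< I x0 >] true))); rewrite one_back mul0mx.
  by move/eqP; rewrite eq_sym (negbTE (const1_row_neq0 isT)).
Qed.

Hypothesis I_monotone : upset I \/ downset I.

Lemma colimit_indicatorP : directed W -> (forall x, W x -> x <= p) ->
  is_colimit_cocone kI W p <-> exists2 x, W x & (I x <-> I p).
Proof.
move=> dirW Wp; split; first exact: colimit_indicator_agree dirW.1 Wp.
by move=> agree; apply: colimit_indicator => //; exact: eventually_up_agree.
Qed.

Lemma limit_indicatorP : codirected W -> (forall x, W x -> p <= x) ->
  is_limit_cone kI W p <-> exists2 x, W x & (I x <-> I p).
Proof.
move=> codirW Wp; split; first exact: limit_indicator_agree codirW.1 Wp.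
by move=> agree; apply: limit_indicator => //; exact: eventually_down_agree.
Qed.

End IndicatorColimits.

Section ContinuousPoset.
Variables (disp : Order.disp_t) (P : porderType disp).
Hypothesis P_continuous : continuous_poset P.

Lemma lower_semicontinuous_indicatorP (k : comNzRingType) (I : set P) :
  upset I \/ downset I ->
  pm_lower_semicontinuous (indicator_module k I) <->
  forall p, exists2 x, way_below x p & (I x <-> I p).
Proof.
move=> Imono; split=> lsc p; have [dir _] := P_continuous p;
  have [to_agree of_agree] := colimit_indicatorP (k:=k) Imono dir (way_below_le^~ p).
- exact: to_agree (lsc p).
- exact: of_agree (lsc p).
Qed.

Lemma scott_open_upsetP (U : set P) : upset U ->
  scott_open U <-> forall p, exists2 x, way_below x p & (U x <-> U p).
Proof.
move=> Uup; split=> [[_ Uscott] p | approx].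
- have [dir sup] := P_continuous p.
  have [Up|nUp] := pselect (U p).
    by have [x wx Ux] := Uscott _ p dir sup Up; exists x.
  have [[x wx] _] := dir; exists x => //; split=> // Ux.
  exact: Uup _ _ Ux (way_below_le wx).
- split=> // S s dirS supS Us.
  have [x wx [_ Ux]] := approx s.
  have [d Sd xd] := wx S s dirS supS (lexx s).
  by exists d => //; exact: Uup _ _ (Ux Us) xd.
Qed.

Lemma scott_closed_downsetP (D : set P) : downset D ->
  scott_closed D <-> forall p, exists2 x, way_below x p & (D x <-> D p).
Proof.
move=> Ddown; rewrite /scott_closed scott_open_upsetP; last first.
  by move=> x y nDx xy Dy; exact/nDx/(Ddown _ _ Dy xy).
by split=> approx p; have [x wx e] := approx p; exists x => //; apply/iff_not2.
Qed.

End ContinuousPoset.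

Section EuclideanSpace.
Variables (R : realType) (n : nat).
Local Notation T := (Rn R n).

Lemma Rn_leP (x y : T) : x <= y <-> forall i, x ord0 i <= y ord0 i.
Proof. by split=> [/forallP|/forallP]. Qed.

Lemma lt_way_below_Rn (p x : T) : (forall i, p ord0 i < x ord0 i) -> way_below p x.
Proof.
move=> px D s dirD [ub lub] xs.
have near_top i : exists d, D d /\ p ord0 i < d ord0 i.
  (* Otherwise lowering the [i]-th coordinate of [s] to [p_i] still bounds
     [D], contradicting [p_i < x_i <= s_i]. *)
  apply: contrapT => none.
  pose u : T := \row_j (if j == i then p ord0 i else s ord0 j).
  have su : s <= u.
    apply: lub => d Dd; apply/Rn_leP => j; rewrite mxE; case: eqP => [->|_].
      by rewrite leNgt; apply/negP => pd; apply: none; exists d.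
    exact: (Rn_leP _ _).1 (ub d Dd) j.
  have := lt_le_trans (px i) (le_trans ((Rn_leP _ _).1 xs i) ((Rn_leP _ _).1 su i)).
  by rewrite mxE eqxx ltxx.
have [dd Ddd] := choice near_top.
have [d Dd dd_d] := directed_finite_ub dirD (fun i => (Ddd i).1).
exists d => //; apply/Rn_leP => i.
exact: ltW (lt_le_trans (Ddd i).2 ((Rn_leP _ _).1 (dd_d i) i)).
Qed.

Lemma way_below_Rn_lt (p x : T) : way_below p x -> forall i, p ord0 i < x ord0 i.
Proof.
move=> px i.
pose D : set T := [set y | exists2 t : R, 0 < t & y = x - const_mx t].
have dirD : directed D.
  split; first by exists (x - const_mx 1); exists 1.
  move=> _ _ [t1 t10 ->] [t2 t20 ->].
  exists (x - const_mx (Num.min t1 t2)); split.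
  - by exists (Num.min t1 t2) => //; rewrite lt_min t10 t20.
  - by apply/Rn_leP => j; rewrite !mxE lerD2l lerN2 ge_min lexx.
  - by apply/Rn_leP => j; rewrite !mxE lerD2l lerN2 ge_min lexx orbT.
have supD : is_sup D x.
  split=> [_ [t t0 ->]|u ub].
    by apply/Rn_leP => j; rewrite !mxE lerBlDr lerDl ltW.
  apply/Rn_leP => j; apply/ler_addgt0Pr => e e0.
  have /Rn_leP/(_ j) := ub (x - const_mx e) (ex_intro2 _ _ e e0 erefl).
  by rewrite !mxE lerBlDr.
have [_ [t t0 ->] /Rn_leP/(_ i)] := px D x dirD supD (lexx x).
by rewrite !mxE => /le_lt_trans; apply; rewrite ltrBlDr ltrDl.
Qed.

Lemma way_below_Rn_codirected (p : T) : codirected (way_below p).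
Proof.
split=> [|x y px py].
  by exists (p + const_mx 1); apply: lt_way_below_Rn => i; rewrite !mxE ltrDl ltr01.
exists (\row_j Num.min (x ord0 j) (y ord0 j)); split.
- by apply: lt_way_below_Rn => j; rewrite mxE lt_min !way_below_Rn_lt.
- by apply/Rn_leP => j; rewrite mxE ge_min lexx.
- by apply/Rn_leP => j; rewrite mxE ge_min lexx orbT.
Qed.

Lemma open_lt_Rn (x : T) : open [set q : 'rV[R]_n | forall i, q ord0 i < x ord0 i].
Proof.
rewrite openE => q qx.
have near_q i : nbhs q [set r : 'rV[R]_n | r ord0 i < x ord0 i].
  have : open ((fun r : 'rV[R]_n => r ord0 i) @^-1` [set y | y < x ord0 i]).
    by apply: open_comp; [move=> r _; exact: coord_continuous | exact: open_lt].
  by rewrite openE => /(_ q (qx i)).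
exact: filter_forall near_q.
Qed.

Lemma open_downsetP (A : set T) : downset A ->
  open (A : set 'rV[R]_n) <-> forall p, exists2 x, way_below p x & (A x <-> A p).
Proof.
move=> Adown; split=> [Aopen p | approx].
- have [Ap|nAp] := pselect (A p); last first.
    have [[x px] _] := way_below_Rn_codirected p; exists x => //; split=> // Ax.
    exact: Adown _ _ Ax (way_below_le px).
  move: Aopen; rewrite openE => /(_ p Ap) /nbhs_ballP [e e0 pA].
  exists (p + const_mx (e / 2)).
    by apply: lt_way_below_Rn => i; rewrite !mxE ltrDl divr_gt0.
  split=> // _; apply: pA; split=> // i j; rewrite !mxE.
  rewrite -ball_normE /= opprD addrA subrr add0r normrN.
  by rewrite gtr0_norm ?divr_gt0 // ltr_pdivrMr // ltr_pMr // ltr1n.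
- rewrite openE => p Ap; have [x px [_ Ax]] := approx p.
  have := @open_lt_Rn x; rewrite openE => /(_ p (way_below_Rn_lt px)).
  apply: filterS => q qx; apply: Adown (Ax Ap) _.
  by apply/Rn_leP => i; exact/ltW/qx.
Qed.

Lemma closed_upsetP (U : set T) : upset U ->
  closed (U : set 'rV[R]_n) <-> forall p, exists2 x, way_below p x & (U x <-> U p).
Proof.
move=> Uup; rewrite -openC open_downsetP; last first.
  by move=> x y nUy xy Ux; exact/nUy/(Uup _ _ Ux xy).
by split=> approx p; have [x px e] := approx p; exists x => //; apply/iff_not2.
Qed.

Lemma upper_semicontinuous_indicator_RnP (k : comNzRingType) (I : set T) :
  upset I \/ downset I ->
  pm_upper_semicontinuous (indicator_module k I) <->
  forall p, exists2 x, way_below p x & (I x <-> I p).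
Proof.
move=> Imono; split=> usc p;
  have [to_agree of_agree] :=
    limit_indicatorP (k:=k) Imono (way_below_Rn_codirected p) (@way_below_le _ _ p).
- exact: to_agree (usc p).
- exact: of_agree (usc p).
Qed.

End EuclideanSpace.

Theorem mainTheorem9 :
  (forall (k : comNzRingType) (disp : Order.disp_t) (P : porderType disp),
     continuous_poset P ->
     (forall U : set P, upset U ->
        (pm_lower_semicontinuous (indicator_module k U) <-> scott_open U)) /\
     (forall D : set P, downset D ->
        (pm_lower_semicontinuous (indicator_module k D) <-> scott_closed D))) /\
  (forall (k : comNzRingType) (R : realType) (n : nat),
     (forall U : set (Rn R n), upset U ->
        (pm_upper_semicontinuous (indicator_module k U) <->
         closed (U : set 'rV[R]_n))) /\
     (forall D : set (Rn R n), downset D ->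
        (pm_upper_semicontinuous (indicator_module k D) <->
         open (D : set 'rV[R]_n)))).
Proof.
split=> [k disp P Pcont | k R n]; split=> [U Uup | D Ddown].
- rewrite (scott_open_upsetP Pcont Uup).
  exact (lower_semicontinuous_indicatorP Pcont k (or_introl Uup)).
- rewrite (scott_closed_downsetP Pcont Ddown).
  exact (lower_semicontinuous_indicatorP Pcont k (or_intror Ddown)).
- rewrite (closed_upsetP Uup).
  exact (upper_semicontinuous_indicator_RnP k (or_introl Uup)).
- rewrite (open_downsetP Ddown).
  exact (upper_semicontinuous_indicator_RnP k (or_intror Ddown)).
Qed.
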